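(* Let $p\in(0,1)$ and $x\geq 1$. Let $(\xi_n)_{n\geq1}$ be i.i.d. random variables with $\mathbf{P}(\xi_1=1)=p=1-\mathbf{P}(\xi_1=-1)$. Set $W_0:=x$, $B_1:=1$ and, for $n\geq 1$, $W_n:=W_{n-1}+\xi_nB_n$ and $B_{n+1}:=B_n2^{\xi_n}$. Let $f(x,p):=\mathbf{P}(W_n\leq 0 \text{ for some } n)$. Then $f(x,p)<1$ if and only if $x>2$ and $p<1/2$.
   Context: $W_n$ is the wealth of a gambler after $n$ rounds (initial fortune $x$) and $B_n$ is the bet at round $n$: the bet is doubled after each win ($\xi_n=1$) and halved after each loss ($\xi_n=-1$). $f(x,p)$ is the ruin probability. *)

From Stdlib Require Import Reals List.
From Coquelicot Require Import Coquelicot.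
Open Scope R_scope.

(* A realization of the first N coin tosses xi_1..xi_N is a list of booleans
   [b_1; ...; b_N], b_k = true meaning xi_k = 1 (a win), false meaning xi_k = -1. *)
Definition sgn (b : bool) : R := if b then 1 else -1.

(* xi_n for n >= 1 (index 0 is unused); beyond the horizon the value is irrelevant. *)
Definition xi_of (l : list bool) (n : nat) : R := sgn (nth (pred n) l true).

(* bet xi n = B_{n+1}:  B_1 = 1,  B_{n+1} = B_n * 2^{xi_n}. *)
Fixpoint bet (xi : nat -> R) (n : nat) : R :=
  match n with
  | O => 1
  | S m => bet xi m * Rpower 2 (xi (S m))
  end.

Fixpoint wealth (x : R) (xi : nat -> R) (n : nat) : R :=
  match n with
  | O => x
  | S m => wealth x xi m + xi (S m) * bet xi m
  end.

Fixpoint all_paths (N : nat) : list (list bool) :=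
  match N with
  | O => nil :: nil
  | S m => map (cons true) (all_paths m) ++ map (cons false) (all_paths m)
  end.

Definition path_prob (p : R) (l : list bool) : R :=
  fold_right Rmult 1 (map (fun b : bool => if b then p else 1 - p) l).

Definition ruined_by (x : R) (N : nat) (l : list bool) : bool :=
  existsb (fun n => if Rle_dec (wealth x (xi_of l) n) 0 then true else false)
          (seq 0 (S N)).

Definition ruin_prob_by (x p : R) (N : nat) : R :=
  fold_right Rplus 0
    (map (fun l => if ruined_by x N l then path_prob p l else 0) (all_paths N)).

(* f(x,p) = P(W_n <= 0 for some n) = lim_N P(W_n <= 0 for some n <= N)
   (continuity from below of the probability along the increasing events). *)
Definition ruin_prob (x p : R) : R := real (Lim_seq (ruin_prob_by x p)).

From Stdlib Require Import Reals Lra List.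
From Coquelicot Require Import Coquelicot.
Open Scope R_scope.

(* The bet is rescaled multiplicatively, so the game is scale invariant: after the first toss it
   restarts with unit bet from the normalized fortune W_1/B_2, that is (x+1)/2 after a win and
   2x-2 after a loss.  Hence the survival probability S = 1 - f vanishes on (-oo,0], satisfies
   S(x) = p S((x+1)/2) + (1-p) S(2x-2) for x > 0, and is nondecreasing.
   - Both moves map (-oo,2] into itself, and from (1,2] win-loss-loss always ruins, so
     sup S over (-oo,2] is at most 1 - p(1-p)^2 times itself, i.e. S = 0 there.
   - The loss map doubles the distance to 2; if S(x) = 0 for some x > 2, then S vanishes along
     2 + 2^k (x-2), hence everywhere by monotonicity.
   - For p >= 1/2, h_j = S(2 + 2^j) satisfies h_0 = (1-p) h_1 and
     h_(j+1) <= p h_j + (1-p) h_(j+2); this makes h convex, and a bounded convex sequence is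
     nonincreasing, so h = 0.
   - For p < 1/2, log(x-1) performs a random walk with positive drift, and for small b > 0,
     min(1, c (x-1)^(-b)) is a supersolution of the ruin equation, which keeps f < 1 far out. *)

Definition lsum {A : Type} (f : A -> R) (l : list A) : R := fold_right Rplus 0 (map f l).

Lemma lsum_app {A : Type} (f : A -> R) (l l' : list A) :
  lsum f (l ++ l') = lsum f l + lsum f l'.
Proof. unfold lsum; induction l as [|a l IH]; simpl; [lra | rewrite IH; lra]. Qed.

Lemma lsum_map {A B : Type} (f : B -> R) (g : A -> B) (l : list A) :
  lsum f (map g l) = lsum (fun a => f (g a)) l.
Proof. unfold lsum; rewrite map_map; reflexivity. Qed.

Lemma lsum_ext {A : Type} (f g : A -> R) (l : list A) :
  (forall a, f a = g a) -> lsum f l = lsum g l.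
Proof. intros Hfg; unfold lsum; rewrite (map_ext f g Hfg); reflexivity. Qed.

Lemma lsum_scal {A : Type} (c : R) (f : A -> R) (l : list A) :
  lsum (fun a => c * f a) l = c * lsum f l.
Proof. unfold lsum; induction l as [|a l IH]; simpl; [lra | rewrite IH; lra]. Qed.

Lemma lsum_all_paths_S (F : list bool -> R) (N : nat) :
  lsum F (all_paths (S N)) =
  lsum (fun l => F (true :: l)) (all_paths N) + lsum (fun l => F (false :: l)) (all_paths N).
Proof. simpl all_paths; rewrite lsum_app, !lsum_map; reflexivity. Qed.

Lemma le_0_of_le_pow (a c : R) : 0 <= c < 1 -> (forall k, a <= c ^ k) -> a <= 0.
Proof.
  intros Hc Ha.
  apply (is_lim_seq_le (fun _ => a) (fun k => c ^ k) a 0 Ha (is_lim_seq_const a)).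
  apply is_lim_seq_geom; rewrite Rabs_pos_eq; lra.
Qed.

Lemma pow2_unbounded (a : R) : exists k, a <= 2 ^ k.
Proof.
  destruct (Pow_x_infinity 2 ltac:(rewrite Rabs_pos_eq; lra) a) as [k Hk].
  exists k; specialize (Hk k (le_n k)).
  rewrite Rabs_pos_eq in Hk by (apply pow_le; lra); lra.
Qed.

Lemma convex_bounded_nonincreasing (h : nat -> R) (M : R) :
  (forall i, h (S i) - h i <= h (S (S i)) - h (S i)) -> (forall i, h i <= M) ->
  forall i, h (S i) <= h i.
Proof.
  intros Hconv HM i; destruct (Rle_or_lt (h (S i)) (h i)) as [Hle | Hgt]; [exact Hle | exfalso].
  set (d := h (S i) - h i).
  assert (Hd : forall k : nat, d <= h (S (k + i)) - h (k + i)%nat).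
  { induction k as [|k IH]; [simpl; unfold d; lra |].
    pose proof (Hconv (k + i)%nat); simpl in *; lra. }
  assert (Hlin : forall k : nat, h i + INR k * d <= h (k + i)%nat).
  { induction k as [|k IH]; [simpl; lra |].
    rewrite S_INR; pose proof (Hd k); simpl; lra. }
  destruct (INR_unbounded ((M - h i) / d)) as [k Hk].
  assert (Hscale : (M - h i) / d * d = M - h i) by (field; unfold d; lra).
  pose proof (Hlin k); pose proof (HM (k + i)%nat).
  assert (0 < d) by (unfold d; lra); nra.
Qed.

Lemma subharmonic_seq_eq0 (p : R) (h : nat -> R) :
  1 / 2 <= p < 1 -> (forall i, 0 <= h i <= 1) ->
  h 0%nat = (1 - p) * h 1%nat ->
  (forall i, h (S i) <= p * h i + (1 - p) * h (S (S i))) ->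
  forall i, h i = 0.
Proof.
  intros hp Hb H0 Hsub.
  assert (Hinc : forall i, 0 <= h (S i) - h i).
  { induction i as [|i IH]; [pose proof (Hb 1%nat); rewrite H0; nra |].
    pose proof (Hsub i); nra. }
  assert (Hconv : forall i, h (S i) - h i <= h (S (S i)) - h (S i)).
  { intros i; pose proof (Hsub i); pose proof (Hinc i); nra. }
  assert (Hconst : forall i, h (S i) = h i).
  { intros i; pose proof (convex_bounded_nonincreasing h 1 Hconv (fun j => proj2 (Hb j)) i).
    pose proof (Hinc i); lra. }
  assert (Hh0 : h 0%nat = 0) by (rewrite (Hconst 0%nat) in H0; nra).
  induction i as [|i IH]; [exact Hh0 | rewrite Hconst; exact IH].
Qed.

Lemma Rlog2_bounds (t : R) : 1 < t <= 2 -> 0 < Rlog 2 t <= 1.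
Proof.
  intros Ht; unfold Rlog.
  assert (Hln2 : 0 < ln 2) by (rewrite <- ln_1; apply ln_increasing; lra).
  assert (Hlnt : 0 < ln t) by (rewrite <- ln_1; apply ln_increasing; lra).
  assert (Hle : ln t <= ln 2)
    by (destruct (Req_dec t 2) as [-> | Hne]; [lra | left; apply ln_increasing; lra]).
  split; [apply Rdiv_lt_0_compat; lra |].
  apply Rmult_le_reg_r with (ln 2); [lra |]; field_simplify; lra.
Qed.

Lemma Rpower_ge_base (a b : R) : 0 < a <= 1 -> 0 < b <= 1 -> a <= Rpower a b.
Proof.
  intros Ha Hb; unfold Rpower.
  assert (Hln : ln a <= 0).
  { destruct (Req_dec a 1) as [-> | Hne]; [rewrite ln_1; lra |].
    rewrite <- ln_1; left; apply ln_increasing; lra. }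
  rewrite <- (exp_ln a) at 1 by lra.
  destruct (Req_dec (ln a) (b * ln a)) as [E | E]; [rewrite <- E; lra |].
  left; apply exp_increasing; nra.
Qed.

Lemma Rpower_double (z b : R) : 0 < z -> Rpower (2 * z) b = Rpower 2 b * Rpower z b.
Proof. intros Hz; rewrite Rpower_mult_distr; lra. Qed.

Lemma Rpower_double_sub1_ge (z b : R) : 1 < 2 * z -> 0 < b <= 1 ->
  Rpower 2 b * Rpower z b * (1 - / (2 * z)) <= Rpower (2 * z - 1) b.
Proof.
  intros Hz Hb.
  assert (He : 0 < 1 - / (2 * z) <= 1).
  { assert (0 < / (2 * z) < 1)
      by (split; [apply Rinv_0_lt_compat | rewrite <- Rinv_1; apply Rinv_lt_contravar]; lra).
    lra. }
  replace (2 * z - 1) with (2 * z * (1 - / (2 * z))) by (field; lra).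
  rewrite <- Rpower_mult_distr, Rpower_double by lra.
  apply Rmult_le_compat_l; [left; apply Rmult_lt_0_compat; apply exp_pos |].
  apply Rpower_ge_base; lra.
Qed.

Lemma div_one_sub_le (a e d : R) :
  0 < a < 1 -> 0 < d <= 1 -> 0 < e <= d / 2 -> a / (1 - e) <= a + d.
Proof.
  intros Ha Hd He; apply Rmult_le_reg_r with (1 - e); [lra |].
  unfold Rdiv; rewrite Rmult_assoc, Rinv_l by lra; nra.
Qed.

Lemma sum_path_prob (p : R) (N : nat) : lsum (path_prob p) (all_paths N) = 1.
Proof.
  induction N as [|N IH]; [cbv; ring |].
  rewrite lsum_all_paths_S.
  transitivity (p * lsum (path_prob p) (all_paths N) + (1 - p) * lsum (path_prob p) (all_paths N)).
  { rewrite <- !lsum_scal; reflexivity. }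
  rewrite IH; ring.
Qed.

Lemma ruin_prob_by_lsum (x p : R) (N : nat) :
  ruin_prob_by x p N = lsum (fun l => if ruined_by x N l then path_prob p l else 0) (all_paths N).
Proof. reflexivity. Qed.

Lemma ruined_by_nonpos (x : R) (N : nat) (l : list bool) : x <= 0 -> ruined_by x N l = true.
Proof. intros Hx; unfold ruined_by; simpl; destruct (Rle_dec x 0); [reflexivity | lra]. Qed.

Lemma ruin_prob_by_nonpos (x p : R) (N : nat) : x <= 0 -> ruin_prob_by x p N = 1.
Proof.
  intros Hx; rewrite <- (sum_path_prob p N).
  apply lsum_ext; intros l; rewrite ruined_by_nonpos; auto.
Qed.

Lemma ruin_prob_by_0 (x p : R) : 0 < x -> ruin_prob_by x p 0 = 0.
Proof. intros Hx; unfold ruin_prob_by, ruined_by; simpl; destruct (Rle_dec x 0); simpl; lra. Qed.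

(* W_1 / B_2 for W_0 = x and B_1 = 1. *)
Definition next_fortune (b : bool) (x : R) : R := if b then (x + 1) / 2 else 2 * x - 2.

Lemma Rpower_2_sgn (b : bool) : Rpower 2 (sgn b) = if b then 2 else / 2.
Proof.
  destruct b; simpl; [apply Rpower_1; lra |].
  replace (-1) with (- (1)) by ring; rewrite Rpower_Ropp, Rpower_1; lra.
Qed.

Lemma bet_S (xi : nat -> R) (n : nat) : bet xi (S n) = bet xi n * Rpower 2 (xi (S n)).
Proof. reflexivity. Qed.

Lemma wealth_S (x : R) (xi : nat -> R) (n : nat) :
  wealth x xi (S n) = wealth x xi n + xi (S n) * bet xi n.
Proof. reflexivity. Qed.

Lemma xi_of_cons (b : bool) (l : list bool) (n : nat) : xi_of (b :: l) (S (S n)) = xi_of l (S n).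
Proof. reflexivity. Qed.

Lemma bet_cons (b : bool) (l : list bool) (n : nat) :
  bet (xi_of (b :: l)) (S n) = Rpower 2 (sgn b) * bet (xi_of l) n.
Proof.
  induction n as [|n IH]; [change (1 * Rpower 2 (sgn b) = Rpower 2 (sgn b) * 1); ring |].
  rewrite bet_S, IH, xi_of_cons, (bet_S (xi_of l)); ring.
Qed.

Lemma wealth_cons (x : R) (b : bool) (l : list bool) (n : nat) :
  wealth x (xi_of (b :: l)) (S n) = Rpower 2 (sgn b) * wealth (next_fortune b x) (xi_of l) n.
Proof.
  induction n as [|n IH].
  - rewrite Rpower_2_sgn; unfold xi_of; destruct b; simpl; field.
  - rewrite wealth_S, IH, bet_cons, xi_of_cons, (wealth_S _ (xi_of l)); ring.
Qed.

Lemma existsb_map_S (f : nat -> bool) (l : list nat) :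
  existsb f (map S l) = existsb (fun i => f (S i)) l.
Proof. induction l as [|a l IH]; simpl; [reflexivity | rewrite IH; reflexivity]. Qed.

Lemma existsb_ext {A : Type} (f g : A -> bool) (l : list A) :
  (forall a, f a = g a) -> existsb f l = existsb g l.
Proof.
  intros Hfg; induction l as [|a l IH]; simpl; [reflexivity | rewrite Hfg, IH; reflexivity].
Qed.

Lemma nonpos_dec_scale (c w : R) : 0 < c ->
  (if Rle_dec (c * w) 0 then true else false) = (if Rle_dec w 0 then true else false).
Proof.
  intros Hc; destruct (Rle_dec (c * w) 0), (Rle_dec w 0); try reflexivity; exfalso; nra.
Qed.

Lemma ruined_by_cons (x : R) (N : nat) (b : bool) (l : list bool) : 0 < x ->
  ruined_by x (S N) (b :: l) = ruined_by (next_fortune b x) N l.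
Proof.
  intros Hx; unfold ruined_by.
  change (seq 0 (S (S N))) with (0%nat :: seq 1 (S N)).
  rewrite <- seq_shift; cbn [existsb].
  change (wealth x (xi_of (b :: l)) 0) with x.
  destruct (Rle_dec x 0) as [Hx0 | _]; [lra |].
  rewrite Bool.orb_false_l, existsb_map_S; apply existsb_ext; intros n.
  rewrite wealth_cons; apply nonpos_dec_scale, exp_pos.
Qed.

Lemma ruin_prob_by_S (x p : R) (N : nat) : 0 < x ->
  ruin_prob_by x p (S N) =
  p * ruin_prob_by ((x + 1) / 2) p N + (1 - p) * ruin_prob_by (2 * x - 2) p N.
Proof.
  intros Hx; rewrite !ruin_prob_by_lsum, lsum_all_paths_S, <- !lsum_scal.
  f_equal; apply lsum_ext; intros l; rewrite ruined_by_cons by exact Hx; cbn [next_fortune];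
    destruct ruined_by; [reflexivity | ring | reflexivity | ring].
Qed.

Definition ruin_potential (b X0 x : R) : R :=
  if Rle_dec x X0 then 1 else Rpower (X0 - 1) b / Rpower (x - 1) b.

Lemma ruin_potential_nonneg (b X0 x : R) : 0 <= ruin_potential b X0 x.
Proof.
  unfold ruin_potential; destruct Rle_dec; [lra | left; apply Rdiv_lt_0_compat; apply exp_pos].
Qed.

Lemma ruin_potential_le_X0 (b X0 x : R) : x <= X0 -> ruin_potential b X0 x = 1.
Proof. intros Hx; unfold ruin_potential; destruct Rle_dec; [reflexivity | lra]. Qed.

Lemma ruin_potential_le_power (b X0 w : R) : 0 <= b -> 1 < X0 -> 1 < w ->
  ruin_potential b X0 w <= Rpower (X0 - 1) b / Rpower (w - 1) b.
Proof.
  intros Hb HX0 Hw; unfold ruin_potential; destruct Rle_dec as [HwX0 | _]; [| lra].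
  assert (Hpos : 0 < Rpower (w - 1) b) by apply exp_pos.
  assert (Hmono : Rpower (w - 1) b <= Rpower (X0 - 1) b) by (apply Rle_Rpower_l; lra).
  apply (Rmult_le_reg_r (Rpower (w - 1) b)); [exact Hpos |].
  unfold Rdiv; rewrite Rmult_assoc, Rinv_l by lra; lra.
Qed.

Lemma ruin_potential_win_le (b X0 x : R) : 0 <= b -> 1 < X0 -> 1 < x ->
  ruin_potential b X0 ((x + 1) / 2) <= Rpower 2 b * (Rpower (X0 - 1) b / Rpower (x - 1) b).
Proof.
  intros Hb HX0 Hx.
  eapply Rle_trans; [apply ruin_potential_le_power; lra |].
  replace ((x + 1) / 2 - 1) with ((x - 1) / 2) by field.
  replace (Rpower (x - 1) b) with (Rpower 2 b * Rpower ((x - 1) / 2) b)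
    by (rewrite <- Rpower_double by lra; f_equal; field).
  right; field; split; apply Rgt_not_eq, exp_pos.
Qed.

Lemma ruin_potential_loss_le (b X0 x : R) : 0 < b <= 1 -> 1 < X0 -> 3 / 2 < x ->
  ruin_potential b X0 (2 * x - 2) <=
  Rpower (X0 - 1) b / Rpower (x - 1) b / (Rpower 2 b * (1 - / (2 * (x - 1)))).
Proof.
  intros Hb HX0 Hx.
  eapply Rle_trans; [apply ruin_potential_le_power; lra |].
  replace (2 * x - 2 - 1) with (2 * (x - 1) - 1) by ring.
  pose proof (Rpower_double_sub1_ge (x - 1) b ltac:(lra) Hb) as Hge.
  assert (He : 0 < 1 - / (2 * (x - 1))).
  { assert (/ (2 * (x - 1)) < 1) by (rewrite <- Rinv_1; apply Rinv_lt_contravar; lra); lra. }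
  assert (0 < Rpower 2 b) by apply exp_pos; assert (0 < Rpower (x - 1) b) by apply exp_pos.
  replace (Rpower (X0 - 1) b / Rpower (x - 1) b / (Rpower 2 b * (1 - / (2 * (x - 1)))))
    with (Rpower (X0 - 1) b / (Rpower 2 b * Rpower (x - 1) b * (1 - / (2 * (x - 1)))))
    by (field; repeat split; lra).
  unfold Rdiv; apply Rmult_le_compat_l; [left; apply exp_pos |].
  apply Rinv_le_contravar; [apply Rmult_lt_0_compat; [apply Rmult_lt_0_compat |] |]; lra.
Qed.

Section FiniteHorizon.

Variable p : R.
Hypothesis hp : 0 < p < 1.

Lemma ruin_prob_by_bounds (N : nat) (x : R) : 0 <= ruin_prob_by x p N <= 1.
Proof.
  revert x; induction N as [|N IH]; intros x;
    (destruct (Rle_or_lt x 0) as [Hx | Hx]; [rewrite ruin_prob_by_nonpos; lra |]).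
  - rewrite ruin_prob_by_0; lra.
  - rewrite ruin_prob_by_S by exact Hx.
    pose proof (IH ((x + 1) / 2)); pose proof (IH (2 * x - 2)); nra.
Qed.

Lemma ruin_prob_by_le_S (N : nat) (x : R) : ruin_prob_by x p N <= ruin_prob_by x p (S N).
Proof.
  revert x; induction N as [|N IH]; intros x;
    (destruct (Rle_or_lt x 0) as [Hx | Hx]; [rewrite !ruin_prob_by_nonpos; lra |]).
  - rewrite ruin_prob_by_0 by exact Hx; apply ruin_prob_by_bounds.
  - rewrite (ruin_prob_by_S x p (S N)), (ruin_prob_by_S x p N) by exact Hx.
    pose proof (IH ((x + 1) / 2)); pose proof (IH (2 * x - 2)); nra.
Qed.

Lemma ruin_prob_by_antitone (N : nat) (x y : R) :
  x <= y -> ruin_prob_by y p N <= ruin_prob_by x p N.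
Proof.
  revert x y; induction N as [|N IH]; intros x y Hxy;
    (destruct (Rle_or_lt y 0) as [Hy | Hy]; [rewrite !ruin_prob_by_nonpos; lra |]);
    (destruct (Rle_or_lt x 0) as [Hx | Hx];
       [rewrite (ruin_prob_by_nonpos x) by exact Hx; apply ruin_prob_by_bounds |]).
  - rewrite !ruin_prob_by_0 by assumption; lra.
  - rewrite !ruin_prob_by_S by assumption.
    pose proof (IH ((x + 1) / 2) ((y + 1) / 2) ltac:(lra)).
    pose proof (IH (2 * x - 2) (2 * y - 2) ltac:(lra)); nra.
Qed.

Lemma ruin_prob_by_le_supersolution (phi : R -> R) :
  (forall x, 0 <= phi x) -> (forall x, x <= 0 -> 1 <= phi x) ->
  (forall x, 0 < x -> phi x < 1 -> p * phi ((x + 1) / 2) + (1 - p) * phi (2 * x - 2) <= phi x) ->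
  forall N x, ruin_prob_by x p N <= phi x.
Proof.
  intros Hphi0 Hphi_nonpos Hsuper N; induction N as [|N IH]; intros x;
    (destruct (Rle_or_lt x 0) as [Hx | Hx]; [rewrite ruin_prob_by_nonpos; auto |]).
  - rewrite ruin_prob_by_0; auto.
  - destruct (Rle_or_lt 1 (phi x)) as [Hphi1 | Hphi1].
    + pose proof (ruin_prob_by_bounds (S N) x); lra.
    + rewrite ruin_prob_by_S by exact Hx.
      pose proof (Hsuper x Hx Hphi1).
      pose proof (IH ((x + 1) / 2)); pose proof (IH (2 * x - 2)); nra.
Qed.

(* The slack [d] absorbs the [-1] in [2 (x - 1) - 1] as soon as [(x - 1) d >= 1]. *)
Lemma ruin_potential_supersolution (b X0 : R) :
  let t := Rpower 2 b in let d := 1 - p * t - (1 - p) / t in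
  0 < b <= 1 -> 0 < d -> 1 <= (X0 - 1) * d ->
  forall x, 0 < x -> ruin_potential b X0 x < 1 ->
  p * ruin_potential b X0 ((x + 1) / 2) + (1 - p) * ruin_potential b X0 (2 * x - 2)
  <= ruin_potential b X0 x.
Proof.
  intros t d Hb Hd HX0 x Hx Hlt.
  assert (Ht : 1 < t) by (unfold t; rewrite <- (Rpower_O 2) by lra; apply Rpower_lt; lra).
  assert (Hd1 : d < 1).
  { assert (0 < p * t) by nra; assert (0 < (1 - p) / t) by (apply Rdiv_lt_0_compat; lra).
    unfold d; lra. }
  assert (HX2 : 2 < X0) by nra.
  assert (HxX0 : X0 < x) by (unfold ruin_potential in Hlt; destruct Rle_dec; lra).
  set (e := / (2 * (x - 1))).
  assert (He : 0 < e <= d / 2).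
  { assert (Hze : e * (2 * (x - 1)) = 1) by (unfold e; field; lra).
    assert (He0 : 0 < e) by (unfold e; apply Rinv_0_lt_compat; lra).
    assert (0 < e * ((x - 1) * d - 1)) by (apply Rmult_lt_0_compat; nra); split; nra. }
  set (A := Rpower (X0 - 1) b / Rpower (x - 1) b).
  assert (HA : 0 < A) by (apply Rdiv_lt_0_compat; apply exp_pos).
  assert (Hphi : ruin_potential b X0 x = A)
    by (unfold ruin_potential; destruct Rle_dec; [lra | reflexivity]).
  pose proof (ruin_potential_win_le b X0 x ltac:(lra) ltac:(lra) ltac:(lra)) as Hwin.
  pose proof (ruin_potential_loss_le b X0 x Hb ltac:(lra) ltac:(lra)) as Hloss.
  fold t e A in Hwin, Hloss.
  assert (Hq : (1 - p) / t / (1 - e) <= (1 - p) / t + d).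
  { apply div_one_sub_le; [split | lra | exact He].
    - apply Rdiv_lt_0_compat; lra.
    - apply Rlt_div_l; lra. }
  assert (Hloss' : (1 - p) * (A / (t * (1 - e))) = A * ((1 - p) / t / (1 - e)))
    by (field; lra).
  assert (Hsum : p * (t * A) + A * ((1 - p) / t + d) = A) by (unfold d; field; lra).
  rewrite Hphi; nra.
Qed.

End FiniteHorizon.

Definition survival_prob (x p : R) : R := 1 - ruin_prob x p.

Section Survival.

Variable p : R.
Hypothesis hp : 0 < p < 1.

Lemma is_lim_seq_ruin_prob (x : R) : is_lim_seq (ruin_prob_by x p) (ruin_prob x p).
Proof.
  destruct (ex_finite_lim_seq_incr (ruin_prob_by x p) 1) as [l Hl].
  - intros N; apply ruin_prob_by_le_S, hp.
  - intros N; apply ruin_prob_by_bounds, hp.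
  - unfold ruin_prob; rewrite (is_lim_seq_unique _ _ Hl); exact Hl.
Qed.

Lemma ruin_prob_by_le_ruin_prob (N : nat) (x : R) : ruin_prob_by x p N <= ruin_prob x p.
Proof.
  apply (is_lim_seq_incr_compare (ruin_prob_by x p)); [apply is_lim_seq_ruin_prob |].
  intros n; apply ruin_prob_by_le_S, hp.
Qed.

Lemma ruin_prob_le (x c : R) : (forall N, ruin_prob_by x p N <= c) -> ruin_prob x p <= c.
Proof.
  intros Hc.
  exact (is_lim_seq_le _ (fun _ => c) _ c Hc (is_lim_seq_ruin_prob x) (is_lim_seq_const c)).
Qed.

Lemma ruin_prob_S (x : R) : 0 < x ->
  ruin_prob x p = p * ruin_prob ((x + 1) / 2) p + (1 - p) * ruin_prob (2 * x - 2) p.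
Proof.
  intros Hx.
  assert (Hshift : is_lim_seq (fun N => ruin_prob_by x p (S N)) (ruin_prob x p))
    by exact (proj1 (is_lim_seq_incr_1 _ _) (is_lim_seq_ruin_prob x)).
  assert (Hstep : is_lim_seq (fun N => ruin_prob_by x p (S N))
                    (p * ruin_prob ((x + 1) / 2) p + (1 - p) * ruin_prob (2 * x - 2) p)).
  { apply (is_lim_seq_ext
             (fun N => p * ruin_prob_by ((x + 1) / 2) p N
                       + (1 - p) * ruin_prob_by (2 * x - 2) p N)).
    - intros N; symmetry; apply ruin_prob_by_S, Hx.
    - apply is_lim_seq_plus'; apply (is_lim_seq_scal_l _ _ (Finite _)), is_lim_seq_ruin_prob. }
  apply is_lim_seq_unique in Hshift, Hstep; rewrite Hshift in Hstep; injection Hstep; auto.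
Qed.

Lemma survival_prob_bounds (x : R) : 0 <= survival_prob x p <= 1.
Proof.
  unfold survival_prob.
  assert (ruin_prob x p <= 1) by (apply ruin_prob_le; intros N; apply ruin_prob_by_bounds, hp).
  pose proof (ruin_prob_by_le_ruin_prob 0 x); pose proof (ruin_prob_by_bounds p hp 0 x); lra.
Qed.

Lemma survival_prob_nonpos (x : R) : x <= 0 -> survival_prob x p = 0.
Proof.
  intros Hx; pose proof (survival_prob_bounds x) as Hb; unfold survival_prob in *.
  pose proof (ruin_prob_by_le_ruin_prob 0 x); rewrite ruin_prob_by_nonpos in * by exact Hx; lra.
Qed.

Lemma survival_prob_monotone (x y : R) : x <= y -> survival_prob x p <= survival_prob y p.
Proof.
  intros Hxy; unfold survival_prob.
  enough (ruin_prob y p <= ruin_prob x p) by lra.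
  apply ruin_prob_le; intros N.
  pose proof (ruin_prob_by_antitone p hp N x y Hxy).
  pose proof (ruin_prob_by_le_ruin_prob N x); lra.
Qed.

Lemma survival_prob_S (x : R) : 0 < x ->
  survival_prob x p = p * survival_prob ((x + 1) / 2) p + (1 - p) * survival_prob (2 * x - 2) p.
Proof. intros Hx; unfold survival_prob; rewrite ruin_prob_S by exact Hx; ring. Qed.

Lemma survival_prob_contract_le2 (M : R) :
  (forall y, y <= 2 -> survival_prob y p <= M) ->
  forall x, x <= 2 -> survival_prob x p <= (1 - p * (1 - p) ^ 2) * M.
Proof.
  intros HM.
  assert (HM0 : 0 <= M)
    by (pose proof (survival_prob_bounds 2); pose proof (HM 2 (Rle_refl 2)); lra).
  assert (Hle1 : forall x, x <= 1 -> survival_prob x p <= p * M).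
  { intros x Hx; destruct (Rle_or_lt x 0) as [Hx0 | Hx0].
    - rewrite survival_prob_nonpos by exact Hx0; nra.
    - rewrite survival_prob_S, (survival_prob_nonpos (2 * x - 2)) by lra.
      pose proof (HM ((x + 1) / 2) ltac:(lra)); nra. }
  intros x Hx; destruct (Rle_or_lt x 1) as [Hx1 | Hx1].
  - pose proof (Hle1 x Hx1).
    assert (0 <= (1 - p) * (1 - p * (1 - p)) * M) by (apply Rmult_le_pos; nra); nra.
  - assert (Hwin : survival_prob ((x + 1) / 2) p <= p * M + (1 - p) * (p * M)).
    { rewrite survival_prob_S by lra.
      replace (2 * ((x + 1) / 2) - 2) with (x - 1) by field.
      pose proof (HM (((x + 1) / 2 + 1) / 2) ltac:(lra)).
      pose proof (Hle1 (x - 1) ltac:(lra)); nra. }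
    rewrite survival_prob_S by lra.
    pose proof (HM (2 * x - 2) ltac:(lra)); nra.
Qed.

Lemma survival_prob_le2 (x : R) : x <= 2 -> survival_prob x p = 0.
Proof.
  intros Hx; set (c := 1 - p * (1 - p) ^ 2).
  assert (Hc : 0 <= c < 1).
  { assert (0 < p * (1 - p) ^ 2) by (apply Rmult_lt_0_compat; [lra | apply pow_lt; lra]).
    unfold c; split; nra. }
  assert (Hpow : forall k y, y <= 2 -> survival_prob y p <= c ^ k).
  { induction k as [|k IH]; intros y Hy; [apply survival_prob_bounds |].
    apply (survival_prob_contract_le2 (c ^ k) IH), Hy. }
  pose proof (le_0_of_le_pow _ _ Hc (fun k => Hpow k x Hx)).
  pose proof (survival_prob_bounds x); lra.
Qed.

Lemma survival_prob_zero_spread (x : R) : 2 < x -> survival_prob x p = 0 ->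
  forall y, survival_prob y p = 0.
Proof.
  intros Hx H0.
  assert (Hiter : forall k, survival_prob (2 + 2 ^ k * (x - 2)) p = 0).
  { induction k as [|k IH]; [rewrite Rmult_1_l; replace (2 + (x - 2)) with x by ring; exact H0 |].
    set (z := 2 + 2 ^ k * (x - 2)) in IH.
    assert (Hz : 0 < z) by (unfold z; pose proof (pow_lt 2 k); nra).
    replace (2 + 2 ^ S k * (x - 2)) with (2 * z - 2) by (unfold z; simpl; ring).
    rewrite survival_prob_S in IH by exact Hz.
    pose proof (survival_prob_bounds ((z + 1) / 2)); pose proof (survival_prob_bounds (2 * z - 2)).
    apply Rle_antisym; nra. }
  intros y; destruct (pow2_unbounded ((y - 2) / (x - 2))) as [k Hk].
  assert (Hy : y <= 2 + 2 ^ k * (x - 2)).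
  { assert ((y - 2) / (x - 2) * (x - 2) = y - 2) by (field; lra); nra. }
  pose proof (survival_prob_monotone y _ Hy); pose proof (survival_prob_bounds y).
  rewrite Hiter in *; lra.
Qed.

Lemma survival_prob_ge_half (x : R) : 1 / 2 <= p -> survival_prob x p = 0.
Proof.
  intros Hp.
  assert (Hh : forall j, survival_prob (2 + 2 ^ j) p = 0).
  { apply (subharmonic_seq_eq0 p (fun j => survival_prob (2 + 2 ^ j) p));
      [lra | intros j; apply survival_prob_bounds | |].
    - simpl; replace (2 + 1) with 3 by ring; replace (2 + 2 * 1) with 4 by ring.
      rewrite survival_prob_S by lra.
      replace ((3 + 1) / 2) with 2 by field; replace (2 * 3 - 2) with 4 by ring.
      rewrite survival_prob_le2 by lra; ring.
    - intros i.
      rewrite (survival_prob_S (2 + 2 ^ S i)) by (pose proof (pow_lt 2 (S i)); lra).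
      replace (2 * (2 + 2 ^ S i) - 2) with (2 + 2 ^ S (S i)) by (simpl; ring).
      assert (survival_prob ((2 + 2 ^ S i + 1) / 2) p <= survival_prob (2 + 2 ^ i) p)
        by (apply survival_prob_monotone; simpl; lra).
      nra. }
  apply (survival_prob_zero_spread 3); [lra |].
  pose proof (Hh 0%nat) as H3; simpl in H3; replace (2 + 1) with 3 in H3 by ring; exact H3.
Qed.

Lemma survival_prob_pos_lt_half : p < 1 / 2 -> exists X, 0 < survival_prob X p.
Proof.
  intros Hp.
  set (t := 3 / 2 - p); set (b := Rlog 2 t).
  assert (Hb : 0 < b <= 1) by (apply Rlog2_bounds; unfold t; lra).
  assert (Ht : Rpower 2 b = t) by (apply Rpower_Rlog; unfold t; lra).
  set (d := 1 - p * t - (1 - p) / t).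
  assert (Hd : 0 < d).
  { replace d with ((1 - 2 * p) * (1 - p / 2) * (1 / 2 - p) / t) by (unfold d, t; field; lra).
    apply Rdiv_lt_0_compat; [repeat apply Rmult_lt_0_compat | unfold t]; lra. }
  set (X0 := 1 + / d).
  assert (HX0 : 1 <= (X0 - 1) * d) by (unfold X0; right; field; lra).
  assert (HX0pos : 1 < X0) by (unfold X0; pose proof (Rinv_0_lt_compat d Hd); lra).
  exists (X0 + 1).
  assert (Hphi : ruin_potential b X0 (X0 + 1) < 1).
  { unfold ruin_potential; destruct Rle_dec; [lra |].
    replace (X0 + 1 - 1) with X0 by ring.
    assert (Rpower (X0 - 1) b < Rpower X0 b) by (apply Rlt_Rpower_l; lra).
    apply Rlt_div_l; [apply exp_pos | lra]. }
  assert (Hle : ruin_prob (X0 + 1) p <= ruin_potential b X0 (X0 + 1)).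
  { apply ruin_prob_le; intros N.
    apply (ruin_prob_by_le_supersolution p hp); [apply ruin_potential_nonneg | |].
    - intros y Hy; rewrite ruin_potential_le_X0 by lra; lra.
    - apply (ruin_potential_supersolution p hp); rewrite ?Ht; assumption. }
  unfold survival_prob; lra.
Qed.

End Survival.

Theorem theorem1p1 (p x : R) (hp : 0 < p < 1) (hx : 1 <= x) :
  ruin_prob x p < 1 <-> (2 < x /\ p < 1 / 2).
Proof.
  assert (Hsurv : ruin_prob x p < 1 <-> 0 < survival_prob x p) by (unfold survival_prob; lra).
  rewrite Hsurv; split.
  - intros Hpos; split.
    + destruct (Rle_or_lt x 2) as [Hx2 | Hx2]; [| exact Hx2].
      rewrite survival_prob_le2 in Hpos by assumption; lra.
    + destruct (Rlt_or_le p (1 / 2)) as [Hp2 | Hp2]; [exact Hp2 |].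
      rewrite survival_prob_ge_half in Hpos by assumption; lra.
  - intros [Hx2 Hp2].
    destruct (survival_prob_pos_lt_half p hp Hp2) as [X HX].
    destruct (Req_dec (survival_prob x p) 0) as [H0 | H0];
      [| pose proof (survival_prob_bounds p hp x); lra].
    rewrite (survival_prob_zero_spread p hp x Hx2 H0 X) in HX; lra.
Qed.
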